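(* The following activation functions $\phi:\mathbb{R}\to\mathbb{R}$ satisfy Property 1, Property 2 and Property 3: the ReLU $\phi(z)=\max\{z,0\}$, the leaky ReLU $\phi(z)=\max\{z,0.01z\}$, the squared ReLU $\phi(z)=\max\{z,0\}^2$, and every non-linear, non-decreasing smooth function with bounded first derivative $\phi'$ that is symmetric (i.e. $\phi'(z)=\phi'(-z)$) and bounded second derivative, e.g. the sigmoid $\phi(z)=1/(1+e^{-z})$, $\tanh$, and $\phi(z)=\int_0^z e^{-t^2}\,dt$. Moreover, the linear function $\phi(z)=z$ does not satisfy Property 2, and the quadratic function $\phi(z)=z^2$ satisfies neither Property 1 nor Property 2.
   Context: Activation functions are continuous; if $\phi$ is not differentiable, $\phi'$ denotes the left derivative. Let $z\sim\mathcal{N}(0,1)$. Property 1: $0\le \phi'(z)\le L_1|z|^p$ for all $z$, for some constants $L_1>0$, $p\ge 0$. Property 2: for $\sigma>0$ let $\alpha_q(\sigma)=\mathbb{E}[\phi'(\sigma z)z^q]$ for $q\in\{0,1,2\}$, $\beta_q(\sigma)=\mathbb{E}[\phi'(\sigma z)^2 z^q]$ for $q\in\{0,2\}$, and $\rho(\sigma)=\min\{\beta_0(\sigma)-\alpha_0(\sigma)^2-\alpha_1(\sigma)^2,\ \beta_2(\sigma)-\alpha_1(\sigma)^2-\alpha_2(\sigma)^2,\ \alpha_0(\sigma)\alpha_2(\sigma)-\alpha_1(\sigma)^2\}$. Property 2 requires $\rho(\sigma)>0$ for all $\sigma>0$. Property 3: either (a) $|\phi''(z)|\le L_2$ for all $z$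 for some constant $L_2$, or (b) $\phi''(z)=0$ except at finitely many ($e$) points. *)

From Stdlib Require Import Reals Lra List.
Open Scope R_scope.

Definition is_left_deriv (f df : R -> R) : Prop :=
  forall z eps, 0 < eps -> exists delta, 0 < delta /\
    forall h, - delta < h -> h < 0 -> Rabs ((f (z + h) - f z) / h - df z) < eps.

(* real power x^p for x >= 0 and p >= 0, with the convention 0^0 = 1 *)
Definition rpow (x p : R) : R :=
  if Req_EM_T x 0 then (if Req_EM_T p 0 then 1 else 0) else Rpower x p.

Definition has_integral (f : R -> R) (a b l : R) : Prop :=
  exists pr : Riemann_integrable f a b, RiemannInt pr = l.

Definition improper_integral (f : R -> R) (l : R) : Prop :=
  (forall a b, exists pr : Riemann_integrable f a b, True) /\
  forall eps, 0 < eps -> exists M, forall a b, a <= - M -> M <= b ->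
    forall pr : Riemann_integrable f a b, Rabs (RiemannInt pr - l) < eps.

Definition gauss_density (z : R) : R := exp (- (z ^ 2) / 2) / sqrt (2 * PI).

Definition gauss_exp (g : R -> R) (l : R) : Prop :=
  improper_integral (fun z => g z * gauss_density z) l.

Definition Property1 (phi : R -> R) : Prop :=
  exists dphi, is_left_deriv phi dphi /\
  exists L1 p, 0 < L1 /\ 0 <= p /\
    forall z, 0 <= dphi z /\ dphi z <= L1 * rpow (Rabs z) p.

Definition Property2 (phi : R -> R) : Prop :=
  exists dphi, is_left_deriv phi dphi /\
  forall sigma, 0 < sigma ->
    exists a0 a1 a2 b0 b2,
      gauss_exp (fun z => dphi (sigma * z)) a0 /\
      gauss_exp (fun z => dphi (sigma * z) * z) a1 /\
      gauss_exp (fun z => dphi (sigma * z) * z ^ 2) a2 /\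
      gauss_exp (fun z => dphi (sigma * z) ^ 2) b0 /\
      gauss_exp (fun z => dphi (sigma * z) ^ 2 * z ^ 2) b2 /\
      0 < Rmin (b0 - a0 ^ 2 - a1 ^ 2)
               (Rmin (b2 - a1 ^ 2 - a2 ^ 2) (a0 * a2 - a1 ^ 2)).

Definition Property3 (phi : R -> R) : Prop :=
  exists dphi, is_left_deriv phi dphi /\
  ( (exists ddphi L2, is_left_deriv dphi ddphi /\
        forall z, Rabs (ddphi z) <= L2)
    \/ (exists S : list R, forall z, ~ In z S -> derivable_pt_lim dphi z 0) ).

Definition AllProps (phi : R -> R) : Prop :=
  Property1 phi /\ Property2 phi /\ Property3 phi.

(* C^infinity: a sequence of successive derivatives *)
Definition smooth_with (phi : R -> R) (D : nat -> R -> R) : Prop :=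
  D 0%nat = phi /\ forall n z, derivable_pt_lim (D n) z (D (S n) z).

Definition relu (z : R) : R := Rmax z 0.
Definition leaky_relu (z : R) : R := Rmax z (z / 100).
Definition sq_relu (z : R) : R := (Rmax z 0) ^ 2.
Definition sigmoid (z : R) : R := 1 / (1 + exp (- z)).

From Stdlib Require Import Reals List Lra Lia Psatz Classical FunctionalExtensionality.
From Coquelicot Require Import Coquelicot.
Open Scope R_scope.

(** For the ReLU family every derivative [phi'(sigma z)] is piecewise a monomial in [z], so
    the Gaussian expectations of Property 2 are combinations of the half-line moments
    [m_k = E[z^k 1_(z > 0)]].  These follow from the Gaussian integral (Feynman's trick) and
    integration by parts, [m_(k+2) = (k+1) m_k]; the three gaps in [rho] then become explicit
    expressions in [sigma] and [m_1^2 = 1/(2 PI)], positive because [2 < PI < 4].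

    For a smooth activation with an even, bounded, non-constant derivative [d >= 0], evenness
    kills [E[d(sigma z) z]], so the first two gaps are the weighted variances
    [E[(d - a_0)^2]] and [E[(d - a_2)^2 z^2]] (using [E[z^2] = 1]); they are positive because
    [d] is not constant on [(0, +oo)], and [a_0 a_2 > 0].  For [phi z = z] and [phi z = z^2]
    the same moments give a gap equal to [0], resp. [-4], and [phi' (-1) = -2 < 0]. *)

Implicit Types f g : R -> R.

Lemma continuity_pt_of_ex_derive f x : ex_derive f x -> continuity_pt f x.
Proof.
  intros H; apply continuity_pt_filterlim.
  now apply (ex_derive_continuous (K:=R_AbsRing) (V:=R_NormedModule)).
Qed.

Lemma continuity_pt_pow_fun f k x : continuity_pt f x -> continuity_pt (fun x => f x ^ k) x.
Proof.
  intros Hf; induction k as [|k IH]; simpl; [|now apply continuity_pt_mult].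
  apply continuity_pt_const; intros ? ?; reflexivity.
Qed.

Lemma continuity_pt_eps f x0 eps : continuity_pt f x0 -> 0 < eps ->
  exists d, 0 < d /\ forall x, Rabs (x - x0) < d -> Rabs (f x - f x0) < eps.
Proof.
  intros Hf Heps; destruct (Hf eps Heps) as [d [Hd Hx]]; exists d; split; [exact Hd|].
  intros x Hxd; destruct (Req_dec x x0) as [->|Hn].
  - now rewrite Rminus_eq_0, Rabs_R0.
  - apply (Hx x); repeat split; auto.
Qed.

Lemma exp_le_exp x y : x <= y -> exp x <= exp y.
Proof. intros [H | ->]; [now apply Rlt_le, exp_increasing | lra]. Qed.

Lemma exp_neg_lt_1 x : 0 < x -> exp (- x) < 1.
Proof. intros Hx; rewrite <- exp_0; apply exp_increasing; lra. Qed.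

Lemma RInt_primitive (F f : R -> R) a b : (forall z, is_derive F z (f z)) ->
  (forall z, continuity_pt f z) -> RInt f a b = F b - F a.
Proof.
  intros HF Hf; apply is_RInt_unique, (is_RInt_derive (V:=R_CompleteNormedModule) F f).
  - intros; apply HF.
  - intros x _; now apply continuity_pt_filterlim.
Qed.

(** * Improper integrals *)

Definition locally_integrable f := forall a b, ex_RInt f a b.

Lemma locally_integrable_continuous f :
  (forall x, continuity_pt f x) -> locally_integrable f.
Proof.
  intros Hf a b; apply (ex_RInt_continuous (V:=R_CompleteNormedModule)); intros z _.
  now apply continuity_pt_filterlim.
Qed.

Lemma locally_integrable_plus f g :
  locally_integrable f -> locally_integrable g -> locally_integrable (fun x => f x + g x).
Proof. intros Hf Hg a b; now apply (ex_RInt_plus (V:=R_CompleteNormedModule)). Qed.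

Lemma locally_integrable_scal f c :
  locally_integrable f -> locally_integrable (fun x => c * f x).
Proof. intros Hf a b; now apply (ex_RInt_scal (V:=R_CompleteNormedModule)). Qed.

(** [improper_integral], phrased with Coquelicot's total [RInt]. *)
Definition is_RInt_line f l : Prop :=
  locally_integrable f /\ forall eps, 0 < eps -> exists M, forall a b,
    a <= - M -> M <= b -> Rabs (RInt f a b - l) < eps.

Lemma improper_integral_of_is_RInt_line f l : is_RInt_line f l -> improper_integral f l.
Proof.
  intros [Hf Hlim]; split.
  - intros a b; now exists (ex_RInt_Reals_0 _ _ _ (Hf a b)).
  - intros eps Heps; destruct (Hlim eps Heps) as [M HM]; exists M.
    intros a b Ha Hb pr; rewrite <- RInt_Reals; auto.
Qed.

Lemma improper_integral_unique f l1 l2 :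
  improper_integral f l1 -> improper_integral f l2 -> l1 = l2.
Proof.
  intros [Hf H1] H2%proj2; apply NNPP; intros Hne.
  set (e := Rabs (l1 - l2) / 2).
  assert (He : 0 < e).
  { enough (0 < Rabs (l1 - l2)) by (unfold e; lra). apply Rabs_pos_lt; intro; apply Hne; lra. }
  destruct (H1 e He) as [M1 HM1], (H2 e He) as [M2 HM2].
  set (M := Rmax (Rabs M1) (Rabs M2)).
  assert (HM1' : - M <= - M1 /\ M1 <= M).
  { unfold M; pose proof (Rmax_l (Rabs M1) (Rabs M2)); pose proof (Rle_abs M1);
    pose proof (Rle_abs (- M1)); rewrite Rabs_Ropp in *; lra. }
  assert (HM2' : - M <= - M2 /\ M2 <= M).
  { unfold M; pose proof (Rmax_r (Rabs M1) (Rabs M2)); pose proof (Rle_abs M2);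
    pose proof (Rle_abs (- M2)); rewrite Rabs_Ropp in *; lra. }
  destruct (Hf (- M) M) as [pr _].
  specialize (HM1 (- M) M ltac:(lra) ltac:(lra) pr).
  specialize (HM2 (- M) M ltac:(lra) ltac:(lra) pr).
  assert (Rabs (l1 - l2) <= Rabs (RiemannInt pr - l2) + Rabs (RiemannInt pr - l1)).
  { replace (l1 - l2) with ((RiemannInt pr - l2) - (RiemannInt pr - l1)) by ring.
    eapply Rle_trans; [apply Rabs_triang | now rewrite Rabs_Ropp]. }
  unfold e in *; lra.
Qed.

Lemma gauss_exp_unique h l1 l2 : gauss_exp h l1 -> gauss_exp h l2 -> l1 = l2.
Proof. apply improper_integral_unique. Qed.

Definition is_RInt_pos f (l : R) : Prop := is_lim (fun b => RInt f 0 b) p_infty l.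

Lemma is_RInt_pos_eps f l : is_RInt_pos f l <->
  forall eps, 0 < eps -> exists M, forall b, M <= b -> Rabs (RInt f 0 b - l) < eps.
Proof.
  split.
  - intros H%is_lim_spec eps Heps; destruct (H (mkposreal eps Heps)) as [M HM].
    exists (M + 1); intros b Hb; apply HM; lra.
  - intros H; apply is_lim_spec; intros eps; destruct (H eps (cond_pos eps)) as [M HM].
    exists M; intros b Hb; apply HM; lra.
Qed.

Lemma is_RInt_pos_ext f g l :
  (forall x, 0 < x -> f x = g x) -> is_RInt_pos f l -> is_RInt_pos g l.
Proof.
  intros E; apply is_lim_ext_loc; exists 0; intros b Hb.
  apply RInt_ext; intros x; rewrite Rmin_left, Rmax_right by lra; intros Hx; apply E; lra.
Qed.

Lemma is_RInt_pos_plus f g lf lg : locally_integrable f -> locally_integrable g ->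
  is_RInt_pos f lf -> is_RInt_pos g lg -> is_RInt_pos (fun x => f x + g x) (lf + lg).
Proof.
  intros If Ig Hf Hg.
  apply is_lim_ext with (fun b => RInt f 0 b + RInt g 0 b).
  - intros b; symmetry; now apply (RInt_plus (V:=R_CompleteNormedModule)).
  - eapply is_lim_plus; [exact Hf | exact Hg | reflexivity].
Qed.

Lemma is_RInt_pos_scal f c l : locally_integrable f ->
  is_RInt_pos f l -> is_RInt_pos (fun x => c * f x) (c * l).
Proof.
  intros If Hf; apply is_lim_ext with (fun b => c * RInt f 0 b).
  - intros b; symmetry; now apply (RInt_scal (V:=R_CompleteNormedModule)).
  - exact (is_lim_scal_l _ c _ l Hf).
Qed.

Lemma is_RInt_pos_comp_scal f k l : locally_integrable f -> 0 < k ->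
  is_RInt_pos f l -> is_RInt_pos (fun z => k * f (k * z)) l.
Proof.
  intros If Hk Hf.
  apply is_lim_ext with (fun b => RInt f 0 (k * b + 0)).
  - intros b; replace 0 with (k * 0 + 0) at 1 by ring.
    rewrite <- (RInt_comp_lin (V:=R_CompleteNormedModule)) by apply If.
    apply RInt_ext; intros x _; now rewrite Rplus_0_r.
  - apply (is_lim_comp_lin (fun b => RInt f 0 b)); [|lra].
    simpl; destruct (Rle_dec 0 k) as [H|H]; [|lra].
    destruct (Rle_lt_or_eq_dec 0 k H); [exact Hf | lra].
Qed.

Lemma RInt_reflect f a : locally_integrable f ->
  RInt f a 0 = RInt (fun z => f (- z)) 0 (- a).
Proof.
  intros If; symmetry; apply is_RInt_unique.
  assert (H : is_RInt (fun y => opp (f (- y))) 0 (- a) (RInt f 0 a)).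
  { apply (is_RInt_comp_opp (V:=R_NormedModule)); rewrite Ropp_0, Ropp_involutive.
    apply (RInt_correct (V:=R_CompleteNormedModule)), If. }
  apply is_RInt_opp in H.
  rewrite <- (opp_RInt_swap (V:=R_CompleteNormedModule)) by apply If.
  eapply is_RInt_ext; [|exact H]; intros x _; apply opp_opp.
Qed.

Lemma is_RInt_line_halves f lp lm : locally_integrable f ->
  is_RInt_pos f lp -> is_RInt_pos (fun z => f (- z)) lm -> is_RInt_line f (lp + lm).
Proof.
  intros If Hp Hm; split; [exact If|]; intros eps Heps.
  destruct (proj1 (is_RInt_pos_eps _ _) Hp (eps / 2)) as [M1 HM1]; [lra|].
  destruct (proj1 (is_RInt_pos_eps _ _) Hm (eps / 2)) as [M2 HM2]; [lra|].
  exists (Rmax M1 M2); intros a b Ha Hb.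
  pose proof (Rmax_l M1 M2); pose proof (Rmax_r M1 M2).
  rewrite <- (RInt_Chasles (V:=R_CompleteNormedModule) f a 0 b) by apply If.
  rewrite RInt_reflect by exact If.
  specialize (HM1 b ltac:(lra)); specialize (HM2 (- a) ltac:(lra)).
  replace (plus (RInt (fun z => f (- z)) 0 (- a)) (RInt f 0 b) - (lp + lm))
    with ((RInt f 0 b - lp) + (RInt (fun z => f (- z)) 0 (- a) - lm))
    by (unfold plus; simpl; ring).
  eapply Rle_lt_trans; [apply Rabs_triang | lra].
Qed.

Lemma is_RInt_line_parity f s l : locally_integrable f ->
  (forall z, f (- z) = s * f z) -> is_RInt_pos f l -> is_RInt_line f (l + s * l).
Proof.
  intros If Hs Hl; apply is_RInt_line_halves; [exact If | exact Hl |].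
  apply is_RInt_pos_ext with (fun z => s * f z); [intros z _; now rewrite Hs|].
  now apply is_RInt_pos_scal.
Qed.

Lemma is_lim_incr_bounded (F : R -> R) K :
  (forall x y, 0 <= x -> x <= y -> F x <= F y) -> (forall x, 0 <= x -> F x <= K) ->
  exists L : R, is_lim F p_infty L.
Proof.
  intros Hm Hb.
  set (E := fun y => exists x, 0 <= x /\ y = F x).
  assert (bE : bound E) by (exists K; intros y [x [Hx ->]]; auto).
  assert (nE : exists y, E y) by (exists (F 0), 0; split; [lra | auto]).
  destruct (completeness E bE nE) as [m [Hub Hlub]].
  exists m; apply is_lim_spec; intros eps.
  assert (Hex : exists x, 0 <= x /\ m - eps < F x).
  { apply NNPP; intros Hn.
    enough (m <= m - eps) by (pose proof (cond_pos eps); lra).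
    apply Hlub; intros y [x [Hx ->]].
    apply Rnot_lt_le; intros Hl; apply Hn; now exists x. }
  destruct Hex as [x0 [Hx0 Hf]]; exists x0; intros b Hbx.
  assert (F x0 <= F b) by (apply Hm; lra).
  assert (F b <= m) by (apply Hub; exists b; split; [lra | auto]).
  apply Rabs_def1; pose proof (cond_pos eps); lra.
Qed.

Lemma RInt_incr_of_nonneg f : locally_integrable f -> (forall x, 0 < x -> 0 <= f x) ->
  forall x y, 0 <= x -> x <= y -> RInt f 0 x <= RInt f 0 y.
Proof.
  intros If Hf x y Hx Hxy.
  rewrite <- (RInt_Chasles (V:=R_CompleteNormedModule) f 0 x y) by apply If.
  enough (0 <= RInt f x y) by (unfold plus; simpl; lra).
  apply RInt_ge_0; [exact Hxy | apply If | intros z Hz; apply Hf; lra].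
Qed.

Lemma RInt_le_is_RInt_pos f l : locally_integrable f -> (forall x, 0 < x -> 0 <= f x) ->
  is_RInt_pos f l -> forall x, 0 <= x -> RInt f 0 x <= l.
Proof.
  intros If Hf Hl x Hx.
  exact (is_lim_le_loc (fun _ => RInt f 0 x) (fun b => RInt f 0 b) p_infty _ _
           ltac:(exists x; intros y Hy; apply RInt_incr_of_nonneg; auto; lra)
           (is_lim_const _ _) Hl).
Qed.

Lemma ex_RInt_pos_dominated f w lw : locally_integrable f -> locally_integrable w ->
  (forall x, 0 < x -> Rabs (f x) <= w x) -> is_RInt_pos w lw -> exists l, is_RInt_pos f l.
Proof.
  intros If Iw Hfw Hw.
  assert (Iu : locally_integrable (fun x => f x + w x)) by now apply locally_integrable_plus.
  assert (Hu : forall x, 0 < x -> 0 <= f x + w x <= 2 * w x).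
  { intros x Hx; specialize (Hfw x Hx); apply Rabs_le_between in Hfw; lra. }
  destruct (is_lim_incr_bounded (fun b => RInt (fun x => f x + w x) 0 b) (2 * lw)) as [l Hl].
  - apply RInt_incr_of_nonneg; [exact Iu | intros x Hx; specialize (Hu x Hx); lra].
  - intros x Hx; apply Rle_trans with (RInt (fun x => 2 * w x) 0 x).
    + apply RInt_le; [exact Hx | apply Iu | now apply locally_integrable_scal |].
      intros z Hz; apply Hu; lra.
    + apply RInt_le_is_RInt_pos; [now apply locally_integrable_scal | | | exact Hx].
      * intros z Hz; specialize (Hu z Hz); lra.
      * now apply is_RInt_pos_scal.
  - exists (l + -1 * lw).
    apply is_RInt_pos_ext with (fun x => (f x + w x) + -1 * w x); [intros; ring|].
    apply is_RInt_pos_plus; [exact Iu | now apply locally_integrable_scal | exact Hl |].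
    now apply is_RInt_pos_scal.
Qed.

Lemma is_RInt_pos_gt0 f l z0 : (forall x, continuity_pt f x) ->
  (forall x, 0 < x -> 0 <= f x) -> 0 < z0 -> 0 < f z0 -> is_RInt_pos f l -> 0 < l.
Proof.
  intros Hc Hp Hz0 Hfz0 Hl.
  assert (If := locally_integrable_continuous f Hc).
  destruct (continuity_pt_eps f z0 (f z0 / 2) (Hc z0)) as [d0 [Hd0 Hd]]; [lra|].
  set (d := Rmin d0 z0 / 2).
  assert (Hdpos : 0 < d /\ d < d0 /\ d < z0).
  { pose proof (Rmin_l d0 z0); pose proof (Rmin_r d0 z0); pose proof (Rmin_pos d0 z0 Hd0 Hz0).
    unfold d; lra. }
  assert (Hbump : d * f z0 <= RInt f (z0 - d) (z0 + d)).
  { apply Rle_trans with (RInt (fun _ => f z0 / 2) (z0 - d) (z0 + d)).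
    - rewrite RInt_const; unfold scal; simpl; unfold mult; simpl; lra.
    - apply RInt_le; [lra | apply ex_RInt_const | apply If |].
      intros x Hx; assert (Hxd : Rabs (x - z0) < d0) by (apply Rabs_def1; lra).
      specialize (Hd x Hxd); apply Rabs_def2 in Hd; lra. }
  assert (Hle : d * f z0 <= RInt f 0 (z0 + d)).
  { rewrite <- (RInt_Chasles (V:=R_CompleteNormedModule) f 0 (z0 - d) (z0 + d)) by apply If.
    enough (0 <= RInt f 0 (z0 - d)) by (unfold plus; simpl; lra).
    apply RInt_ge_0; [lra | apply If | intros x Hx; apply Hp; lra]. }
  pose proof (RInt_le_is_RInt_pos f l If Hp Hl (z0 + d) ltac:(lra)).
  nra.
Qed.

(** * The Gaussian integral *)

Definition gauss (x : R) : R := exp (- (x * x)).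
Definition gauss_int (t : R) : R := RInt gauss 0 t.

(** Feynman's trick: [gauss_int t ^ 2 + gauss_aux_int t] has derivative zero, equals
    [atan 1 = PI/4] at [t = 0], and [gauss_aux_int t <= exp (- t^2)] vanishes at [+oo]. *)
Definition gauss_aux (u t : R) : R := exp (- (u * u * (1 + t * t))) / (1 + t * t).
Definition gauss_aux_int (u : R) : R := RInt (gauss_aux u) 0 1.

Lemma continuity_pt_gauss x : continuity_pt gauss x.
Proof. apply continuity_pt_of_ex_derive; unfold gauss; auto_derive; auto. Qed.

Lemma locally_integrable_gauss : locally_integrable gauss.
Proof. apply locally_integrable_continuous, continuity_pt_gauss. Qed.

Lemma locally_integrable_gauss_aux u : locally_integrable (gauss_aux u).
Proof.
  apply locally_integrable_continuous; intros t.
  apply continuity_pt_of_ex_derive; unfold gauss_aux; auto_derive; nra.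
Qed.

Lemma is_derive_gauss_aux (t u : R) :
  is_derive (fun v => gauss_aux v t) u (-2 * u * exp (- (u * u * (1 + t * t)))).
Proof. unfold gauss_aux; auto_derive; [nra | field; nra]. Qed.

Lemma Derive_gauss_aux (t u : R) :
  Derive (fun v => gauss_aux v t) u = -2 * exp (- (u * u)) * (u * gauss (u * t + 0)).
Proof.
  transitivity (-2 * u * exp (- (u * u * (1 + t * t))));
    [apply is_derive_unique, is_derive_gauss_aux | unfold gauss].
  replace (- (u * u * (1 + t * t))) with (- (u * u) + - ((u * t + 0) * (u * t + 0))) by ring.
  rewrite exp_plus; ring.
Qed.

Lemma continuity_2d_pt_Derive_gauss_aux u t :
  continuity_2d_pt (fun u t => Derive (fun v => gauss_aux v t) u) u t.
Proof.
  apply continuity_2d_pt_ext with (fun u t => -2 * u * exp (- (u * u * (1 + t * t)))).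
  { intros v s; symmetry; apply is_derive_unique, is_derive_gauss_aux. }
  apply continuity_2d_pt_mult.
  - apply continuity_2d_pt_mult; [apply continuity_2d_pt_const | apply continuity_2d_pt_id1].
  - apply continuity_1d_2d_pt_comp with (f := exp) (g := fun u t => - (u * u * (1 + t * t))).
    + apply derivable_continuous_pt, derivable_pt_exp.
    + repeat first [ apply continuity_2d_pt_opp | apply continuity_2d_pt_mult
                   | apply continuity_2d_pt_plus | apply continuity_2d_pt_const
                   | apply continuity_2d_pt_id1 | apply continuity_2d_pt_id2 ].
Qed.

Lemma is_derive_gauss_aux_int (u : R) :
  is_derive gauss_aux_int u (-2 * exp (- (u * u)) * gauss_int u).
Proof.
  unfold gauss_aux_int.
  replace (-2 * exp (- (u * u)) * gauss_int u)
    with (RInt (fun t => Derive (fun v => gauss_aux v t) u) 0 1).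
  - apply is_derive_RInt_param.
    + apply filter_forall; intros v t _; eexists; apply is_derive_gauss_aux.
    + intros t _; apply continuity_2d_pt_Derive_gauss_aux.
    + apply filter_forall; intros v; apply locally_integrable_gauss_aux.
  - rewrite (RInt_ext _ (fun t => -2 * exp (- (u * u)) * (u * gauss (u * t + 0))))
      by (intros t _; apply Derive_gauss_aux).
    assert (E := RInt_comp_lin (V:=R_CompleteNormedModule) gauss u 0 0 1
                   (locally_integrable_gauss _ _)).
    replace (u * 0 + 0) with 0 in E by ring; replace (u * 1 + 0) with u in E by ring.
    rewrite (RInt_scal (V:=R_CompleteNormedModule)).
    + unfold gauss_int; rewrite <- E; reflexivity.
    + apply (ex_RInt_comp_lin (V:=R_CompleteNormedModule)), locally_integrable_gauss.
Qed.

Lemma is_derive_gauss_int (x : R) : is_derive gauss_int x (gauss x).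
Proof.
  apply (is_derive_RInt (V:=R_CompleteNormedModule) gauss gauss_int 0 x).
  - apply filter_forall; intros b.
    apply (RInt_correct (V:=R_CompleteNormedModule)), locally_integrable_gauss.
  - apply continuity_pt_filterlim, continuity_pt_gauss.
Qed.

Lemma gauss_aux_int_0 : gauss_aux_int 0 = PI / 4.
Proof.
  unfold gauss_aux_int; rewrite (RInt_ext _ (fun t => / (1 + t ^ 2))).
  - rewrite (RInt_primitive atan), atan_1, atan_0; [ring| |].
    + intros x; apply is_derive_Reals, derivable_pt_lim_atan.
    + intros x; apply continuity_pt_of_ex_derive; auto_derive; nra.
  - intros s _; unfold gauss_aux.
    replace (- (0 * 0 * (1 + s * s))) with 0 by ring; rewrite exp_0; simpl; field; nra.
Qed.

Lemma gauss_int_sqr_plus_aux t : gauss_int t * gauss_int t + gauss_aux_int t = PI / 4.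
Proof.
  set (G t := gauss_int t * gauss_int t + gauss_aux_int t).
  assert (HG : forall x, is_derive G x 0).
  { intros x; unfold G.
    replace 0 with (gauss x * gauss_int x + gauss_int x * gauss x
                    + (-2 * exp (- (x * x)) * gauss_int x)) by (unfold gauss; ring).
    apply (is_derive_plus (K:=R_AbsRing) (V:=R_NormedModule));
      [|apply is_derive_gauss_aux_int].
    apply (is_derive_mult gauss_int gauss_int); try apply is_derive_gauss_int.
    intros; apply Rmult_comm. }
  assert (Hconst : G t = G 0).
  { destruct (MVT_gen G 0 t (fun _ => 0)) as [c [_ Hc]]; [| |lra].
    - intros; apply HG.
    - intros x _; apply continuity_pt_of_ex_derive; eexists; apply HG. }
  fold (G t); rewrite Hconst; unfold G, gauss_int.
  rewrite RInt_point, gauss_aux_int_0; unfold zero; simpl; ring.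
Qed.

Lemma gauss_aux_int_bounds t : 0 <= gauss_aux_int t <= exp (- (t * t)).
Proof.
  unfold gauss_aux_int; split.
  - apply RInt_ge_0; [lra | apply locally_integrable_gauss_aux |].
    intros s _; unfold gauss_aux; apply Rlt_le, Rdiv_lt_0_compat; [apply exp_pos | nra].
  - replace (exp (- (t * t))) with (RInt (fun _ => exp (- (t * t))) 0 1)
      by (rewrite RInt_const; unfold scal; simpl; unfold mult; simpl; ring).
    apply RInt_le; [lra | apply locally_integrable_gauss_aux | apply ex_RInt_const |].
    intros s Hs; unfold gauss_aux.
    assert (exp (- (t * t * (1 + s * s))) <= exp (- (t * t))) by (apply exp_le_exp; nra).
    pose proof (exp_pos (- (t * t * (1 + s * s)))).
    apply Rle_trans with (exp (- (t * t * (1 + s * s)))); [|exact H].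
    unfold Rdiv; rewrite <- (Rmult_1_r (exp _)) at 2; apply Rmult_le_compat_l; [lra|].
    rewrite <- Rinv_1; apply Rinv_le_contravar; nra.
Qed.

Lemma exp_neg_sqr_le_inv t : 0 < t -> exp (- (t * t)) <= 1 / t.
Proof.
  intros Ht; pose proof (exp_ineq1_le (t * t)).
  assert (exp (- (t * t)) * exp (t * t) = 1)
    by (rewrite <- exp_plus, Rplus_opp_l; apply exp_0).
  pose proof (exp_pos (- (t * t))).
  apply Rmult_le_reg_r with t; [exact Ht|].
  unfold Rdiv; rewrite Rmult_assoc, Rinv_l by lra; nra.
Qed.

Lemma is_RInt_pos_gauss : is_RInt_pos gauss (sqrt PI / 2).
Proof.
  set (s := sqrt PI / 2).
  assert (Hs : 0 < s) by (unfold s; pose proof (sqrt_lt_R0 PI PI_RGT_0); lra).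
  assert (Hss : s * s = PI / 4).
  { unfold s; replace (sqrt PI / 2 * (sqrt PI / 2)) with (sqrt PI * sqrt PI / 4) by field.
    rewrite sqrt_sqrt; [lra | apply Rlt_le, PI_RGT_0]. }
  apply is_RInt_pos_eps; intros eps Heps.
  exists (Rmax 1 (2 / (s * eps))); intros b Hb.
  pose proof (Rmax_l 1 (2 / (s * eps))); pose proof (Rmax_r 1 (2 / (s * eps))).
  assert (HG : 0 <= gauss_int b).
  { apply RInt_ge_0; [lra | apply locally_integrable_gauss |].
    intros; apply Rlt_le, exp_pos. }
  pose proof (gauss_int_sqr_plus_aux b); pose proof (gauss_aux_int_bounds b).
  pose proof (exp_neg_sqr_le_inv b ltac:(lra)).
  assert (Hu : gauss_aux_int b < s * eps).
  { apply Rle_lt_trans with (1 / b); [lra|].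
    apply Rmult_lt_reg_r with b; [lra|].
    unfold Rdiv; rewrite Rmult_assoc, Rinv_l, Rmult_1_r by lra.
    assert (2 <= s * eps * b); [|lra].
    apply Rmult_le_reg_l with (/ (s * eps)); [apply Rinv_0_lt_compat; nra|].
    rewrite <- Rmult_assoc, Rinv_l, Rmult_1_l by nra; unfold Rdiv in *; lra. }
  fold (gauss_int b); apply Rabs_def1; nra.
Qed.

(** * Moments of the standard Gaussian density *)

Lemma gauss_density_0_pos : 0 < gauss_density 0.
Proof.
  unfold gauss_density; apply Rdiv_lt_0_compat; [apply exp_pos|].
  apply sqrt_lt_R0; pose proof PI_RGT_0; lra.
Qed.

Lemma gauss_density_0_sqr : gauss_density 0 ^ 2 = / (2 * PI).
Proof.
  unfold gauss_density; pose proof PI_RGT_0.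
  replace (- (0 ^ 2) / 2) with 0 by field; rewrite exp_0.
  rewrite <- (sqrt_sqrt (2 * PI)) at 2 by lra.
  field; apply Rgt_not_eq, sqrt_lt_R0; lra.
Qed.

Lemma PI_lt_4 : PI < 4.
Proof. pose proof (PI_ineq 1) as H; unfold tg_alt, PI_tg in H; simpl in H; lra. Qed.

Lemma gauss_density_0_sqr_bounds : 1 / 8 < gauss_density 0 ^ 2 < 1 / 4.
Proof.
  rewrite gauss_density_0_sqr; pose proof PI_lt_4; pose proof PI2_1.
  split; apply Rmult_lt_reg_r with (2 * PI); try lra; rewrite Rinv_l; lra.
Qed.

Lemma gauss_density_eq z : gauss_density z = gauss_density 0 * exp (- (z * z) / 2).
Proof.
  unfold gauss_density; replace (- (0 ^ 2) / 2) with 0 by field; rewrite exp_0.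
  replace (z ^ 2) with (z * z) by ring; field.
  apply Rgt_not_eq, sqrt_lt_R0; pose proof PI_RGT_0; lra.
Qed.

Lemma gauss_density_pos z : 0 < gauss_density z.
Proof.
  rewrite gauss_density_eq; apply Rmult_lt_0_compat; [apply gauss_density_0_pos | apply exp_pos].
Qed.

Lemma gauss_density_even z : gauss_density (- z) = gauss_density z.
Proof. rewrite (gauss_density_eq (- z)), (gauss_density_eq z); do 3 f_equal; ring. Qed.

Lemma is_derive_gauss_density (z : R) :
  is_derive gauss_density z (- z * gauss_density z).
Proof.
  apply (is_derive_ext (fun z => gauss_density 0 * exp (- (z * z) / 2))).
  - intros; now rewrite <- gauss_density_eq.
  - rewrite (gauss_density_eq z); auto_derive; [auto|].
    set (e := exp _); field.
Qed.

Lemma continuity_pt_gauss_density z : continuity_pt gauss_density z.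
Proof. apply continuity_pt_of_ex_derive; eexists; apply is_derive_gauss_density. Qed.

Lemma continuity_pt_pow_gauss_density k z :
  continuity_pt (fun z => z ^ k * gauss_density z) z.
Proof.
  apply continuity_pt_mult; [|apply continuity_pt_gauss_density].
  apply derivable_continuous_pt, derivable_pt_pow.
Qed.

Lemma locally_integrable_pow_gauss_density k :
  locally_integrable (fun z => z ^ k * gauss_density z).
Proof. apply locally_integrable_continuous, continuity_pt_pow_gauss_density. Qed.

Lemma is_RInt_pos_gauss_density : is_RInt_pos gauss_density (1 / 2).
Proof.
  set (r := sqrt 2).
  assert (Hr : 0 < r) by (apply sqrt_lt_R0; lra).
  assert (Hrr : r * r = 2) by (apply sqrt_sqrt; lra).
  assert (Hc : gauss_density 0 * r * (sqrt PI / 2) = 1 / 2).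
  { assert (Hp : 0 < sqrt PI) by apply sqrt_lt_R0, PI_RGT_0.
    assert (E : gauss_density 0 * (r * sqrt PI) = 1).
    { unfold gauss_density, r; rewrite <- sqrt_mult by (pose proof PI_RGT_0; lra).
      replace (- (0 ^ 2) / 2) with 0 by field; rewrite exp_0.
      field; apply Rgt_not_eq, sqrt_lt_R0; pose proof PI_RGT_0; lra. }
    rewrite <- E; field. }
  rewrite <- Hc.
  apply is_RInt_pos_ext with (fun z => gauss_density 0 * r * (/ r * gauss (/ r * z))).
  - intros z _; rewrite (gauss_density_eq z); unfold gauss.
    replace (- (/ r * z * (/ r * z))) with (- (z * z) / 2)
      by (field_simplify; [rewrite <- Hrr; field | ]; lra).
    field; lra.
  - apply is_RInt_pos_scal.
    + intros a b; apply ex_RInt_ext with (fun z => scal (/ r) (gauss (/ r * z + 0))).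
      * intros x _; now rewrite Rplus_0_r.
      * apply (ex_RInt_comp_lin (V:=R_CompleteNormedModule)), locally_integrable_gauss.
    + apply is_RInt_pos_comp_scal;
        [apply locally_integrable_gauss | now apply Rinv_0_lt_compat | apply is_RInt_pos_gauss].
Qed.

Lemma pow_gauss_density_tail k b : (k <= 3)%nat -> 1 <= b ->
  0 <= b ^ k * gauss_density b <= 16 * gauss_density 0 / b.
Proof.
  intros Hk Hb; pose proof (gauss_density_pos b); pose proof gauss_density_0_pos.
  assert (Hbk : 0 <= b ^ k <= b * b * b).
  { split; [apply pow_le; lra|]; replace (b * b * b) with (b ^ 3) by ring; now apply Rle_pow. }
  split; [nra|].
  (* [exp (y / 2) >= (y / 4) ^ 2] with [y = b ^ 2] *)
  assert (Hexp : b * b * b * b * exp (- (b * b) / 2) <= 16).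
  { pose proof (exp_ineq1_le (b * b / 4)).
    assert (E : exp (b * b / 4) * exp (b * b / 4) * exp (- (b * b) / 2) = 1)
      by (rewrite <- !exp_plus; replace (b * b / 4 + b * b / 4 + - (b * b) / 2) with 0 by field;
          apply exp_0).
    assert (Hq : b * b / 4 * (b * b / 4) <= exp (b * b / 4) * exp (b * b / 4))
      by (apply Rmult_le_compat; nra).
    apply Rmult_le_compat_r with (r := exp (- (b * b) / 2)) in Hq; [|apply Rlt_le, exp_pos].
    nra. }
  rewrite (gauss_density_eq b).
  apply Rmult_le_reg_r with b; [lra|].
  replace (16 * gauss_density 0 / b * b) with (16 * gauss_density 0) by (field; lra).
  pose proof (exp_pos (- (b * b) / 2)).
  assert (Hk4 : b ^ k * b <= b * b * b * b) by nra.
  apply Rmult_le_compat_r with (r := exp (- (b * b) / 2)) in Hk4; [|lra].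
  nra.
Qed.

Lemma is_lim_pow_gauss_density k : (k <= 3)%nat ->
  is_lim (fun b => b ^ k * gauss_density b) p_infty 0.
Proof.
  intros Hk.
  apply is_lim_le_le_loc with (fun _ => 0) (fun b => 16 * gauss_density 0 * / b).
  - exists 1; intros b Hb; apply pow_gauss_density_tail; [exact Hk | lra].
  - apply is_lim_const.
  - replace (Finite 0) with (Rbar_mult (16 * gauss_density 0) (Rbar_inv p_infty))
      by (simpl; f_equal; ring).
    apply is_lim_scal_l, is_lim_inv; [apply is_lim_id | discriminate].
Qed.

Lemma is_RInt_pos_gauss_density_1 :
  is_RInt_pos (fun z => z ^ 1 * gauss_density z) (gauss_density 0).
Proof.
  apply is_lim_ext with (fun b => gauss_density 0 - b ^ 0 * gauss_density b).
  - intros b; rewrite (RInt_primitive (fun z => - gauss_density z)); [simpl; ring| |].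
    + intros x; replace (x ^ 1 * gauss_density x) with (- (- x * gauss_density x)) by ring.
      apply (is_derive_opp (K:=R_AbsRing) gauss_density), is_derive_gauss_density.
    + apply continuity_pt_pow_gauss_density.
  - replace (Finite (gauss_density 0)) with (Rbar_minus (gauss_density 0) 0)
      by (simpl; f_equal; ring).
    eapply is_lim_minus; [apply is_lim_const | apply is_lim_pow_gauss_density; lia | reflexivity].
Qed.

Lemma is_derive_mult_gauss_density (p : R -> R) (z dp : R) : is_derive p z dp ->
  is_derive (fun z => p z * gauss_density z) z ((dp - z * p z) * gauss_density z).
Proof.
  intros Hp.
  replace ((dp - z * p z) * gauss_density z)
    with (plus (mult dp (gauss_density z)) (mult (p z) (- z * gauss_density z)))
    by (unfold plus, mult; simpl; ring).
  apply (is_derive_mult p gauss_density); [exact Hp | apply is_derive_gauss_density|].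
  intros; apply Rmult_comm.
Qed.

(** Integration by parts against [z * gauss_density z = - gauss_density' z]. *)
Lemma RInt_pow_SS_gauss_density k b :
  RInt (fun z => z ^ S (S k) * gauss_density z) 0 b
  = (INR k + 1) * RInt (fun z => z ^ k * gauss_density z) 0 b - b ^ S k * gauss_density b.
Proof.
  assert (H : RInt (fun z => z ^ S (S k) * gauss_density z
                             - (INR k + 1) * (z ^ k * gauss_density z)) 0 b
              = - (b ^ S k * gauss_density b)).
  { rewrite (RInt_primitive (fun z => - z ^ S k * gauss_density z)); [simpl; ring| |].
    - intros z; eapply is_derive_ext; [intros; reflexivity|].
      replace (z ^ S (S k) * gauss_density z - (INR k + 1) * (z ^ k * gauss_density z))
        with ((- (INR (S k) * 1 * z ^ Nat.pred (S k)) - z * (- z ^ S k)) * gauss_density z)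
        by (rewrite S_INR; simpl; ring).
      apply (is_derive_mult_gauss_density (fun z => - z ^ S k)).
      apply (is_derive_opp (K:=R_AbsRing) (fun z => z ^ S k)).
      apply (is_derive_pow (fun z => z)), (is_derive_id (K:=R_AbsRing)).
    - intros z; apply continuity_pt_minus; [apply continuity_pt_pow_gauss_density|].
      apply continuity_pt_scal, continuity_pt_pow_gauss_density. }
  rewrite (RInt_minus (V:=R_CompleteNormedModule)) in H;
    [|apply locally_integrable_pow_gauss_density|].
  - rewrite (RInt_scal (V:=R_CompleteNormedModule)) in H
      by apply locally_integrable_pow_gauss_density.
    cbn in H |- *; lra.
  - apply locally_integrable_scal, locally_integrable_pow_gauss_density.
Qed.

Lemma is_RInt_pos_pow_SS_gauss_density k m : (k <= 2)%nat ->
  is_RInt_pos (fun z => z ^ k * gauss_density z) m ->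
  is_RInt_pos (fun z => z ^ S (S k) * gauss_density z) ((INR k + 1) * m).
Proof.
  intros Hk Hm.
  apply is_lim_ext with
    (fun b => (INR k + 1) * RInt (fun z => z ^ k * gauss_density z) 0 b
              - b ^ S k * gauss_density b).
  - intros b; symmetry; apply RInt_pow_SS_gauss_density.
  - replace (Finite ((INR k + 1) * m)) with (Rbar_minus ((INR k + 1) * m) 0)
      by (simpl; f_equal; ring).
    apply (is_lim_minus _ _ _ ((INR k + 1) * m) 0);
      [| apply is_lim_pow_gauss_density; lia | reflexivity].
    exact (is_lim_scal_l _ (INR k + 1) _ m Hm).
Qed.

(** [gauss_half_moment k = E[z^k 1_(z > 0)]] for [z ~ N(0,1)], by [m_(k+2) = (k+1) m_k]. *)
Fixpoint gauss_half_moment (k : nat) : R :=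
  match k with
  | O => 1 / 2
  | S O => gauss_density 0
  | S (S j) => (INR j + 1) * gauss_half_moment j
  end.

Lemma is_RInt_pos_gauss_moment k : (k <= 4)%nat ->
  is_RInt_pos (fun z => z ^ k * gauss_density z) (gauss_half_moment k).
Proof.
  assert (H0 : is_RInt_pos (fun z => z ^ 0 * gauss_density z) (1 / 2)).
  { apply is_RInt_pos_ext with gauss_density; [intros; simpl; ring|].
    apply is_RInt_pos_gauss_density. }
  assert (H2 := is_RInt_pos_pow_SS_gauss_density 0 _ ltac:(lia) H0).
  intros Hk; destruct k as [|[|[|[|[|k]]]]]; simpl gauss_half_moment; try lia.
  - exact H0.
  - apply is_RInt_pos_gauss_density_1.
  - exact H2.
  - apply is_RInt_pos_pow_SS_gauss_density; [lia | apply is_RInt_pos_gauss_density_1].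
  - apply is_RInt_pos_pow_SS_gauss_density; [lia | exact H2].
Qed.

Lemma locally_integrable_piecewise f P Q :
  (forall z, continuity_pt P z) -> (forall z, continuity_pt Q z) ->
  (forall z, 0 < z -> f z = P z) -> (forall z, z < 0 -> f z = Q z) -> locally_integrable f.
Proof.
  intros HP HQ EP EQ.
  assert (H0 : forall b, ex_RInt f 0 b).
  { intros b; destruct (Rlt_le_dec 0 b).
    - apply ex_RInt_ext with P; [|now apply locally_integrable_continuous].
      rewrite Rmin_left by lra; intros x Hx; symmetry; apply EP; lra.
    - apply ex_RInt_ext with Q; [|now apply locally_integrable_continuous].
      rewrite Rmax_left by lra; intros x Hx; symmetry; apply EQ; lra. }
  intros a b; apply ex_RInt_Chasles with 0; [apply ex_RInt_swap|]; apply H0.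
Qed.

Lemma gauss_exp_of_is_RInt_line h l :
  is_RInt_line (fun z => h z * gauss_density z) l -> gauss_exp h l.
Proof. apply improper_integral_of_is_RInt_line. Qed.

Lemma gauss_exp_piecewise_monomial h k u v : (k <= 4)%nat ->
  (forall z, 0 < z -> h z = u * z ^ k) -> (forall z, 0 < z -> h (- z) = v * z ^ k) ->
  gauss_exp h ((u + v) * gauss_half_moment k).
Proof.
  intros Hk Hu Hv; apply gauss_exp_of_is_RInt_line.
  assert (Hm := is_RInt_pos_gauss_moment k Hk).
  rewrite Rmult_plus_distr_r; apply is_RInt_line_halves.
  - apply locally_integrable_piecewise with (fun z => u * (z ^ k * gauss_density z))
      (fun z => v * ((- z) ^ k * gauss_density z)).
    + intros z; apply continuity_pt_scal, continuity_pt_pow_gauss_density.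
    + intros z; apply continuity_pt_scal, continuity_pt_mult; [|apply continuity_pt_gauss_density].
      apply continuity_pt_of_ex_derive; auto_derive; auto.
    + intros z Hz; rewrite Hu; [ring | exact Hz].
    + intros z Hz; rewrite <- (Ropp_involutive z) at 1; rewrite Hv; [ring | lra].
  - apply is_RInt_pos_ext with (fun z => u * (z ^ k * gauss_density z));
      [intros z Hz; rewrite Hu; [ring | exact Hz]|].
    apply is_RInt_pos_scal; [apply locally_integrable_pow_gauss_density | exact Hm].
  - apply is_RInt_pos_ext with (fun z => v * (z ^ k * gauss_density z));
      [intros z Hz; rewrite Hv, gauss_density_even; [ring | exact Hz]|].
    apply is_RInt_pos_scal; [apply locally_integrable_pow_gauss_density | exact Hm].
Qed.

(** * Left derivatives and the three properties *)

Lemma is_left_deriv_unique f d z l :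
  is_left_deriv f d -> derivable_pt_lim f z l -> d z = l.
Proof.
  intros Hl Hd; apply NNPP; intros Hne.
  set (e := Rabs (d z - l) / 2).
  assert (He : 0 < e).
  { enough (0 < Rabs (d z - l)) by (unfold e; lra). apply Rabs_pos_lt; intro; apply Hne; lra. }
  destruct (Hl z e He) as [d1 [Hd1 Hq1]], (Hd e He) as [d2 Hq2].
  set (h := - Rmin d1 d2 / 2).
  assert (Hm : 0 < Rmin d1 d2) by (apply Rmin_pos; [exact Hd1 | apply cond_pos]).
  pose proof (Rmin_l d1 d2); pose proof (Rmin_r d1 d2).
  specialize (Hq1 h ltac:(unfold h; lra) ltac:(unfold h; lra)).
  specialize (Hq2 h ltac:(unfold h; lra) ltac:(unfold h; rewrite Rabs_left; lra)).
  assert (Rabs (d z - l) <= Rabs ((f (z + h) - f z) / h - d z) + Rabs ((f (z + h) - f z) / h - l)).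
  { replace (d z - l) with (- ((f (z + h) - f z) / h - d z) + ((f (z + h) - f z) / h - l)) by ring.
    eapply Rle_trans; [apply Rabs_triang | now rewrite Rabs_Ropp]. }
  unfold e in *; lra.
Qed.

Lemma is_left_deriv_of_derivable f d :
  (forall z, derivable_pt_lim f z (d z)) -> is_left_deriv f d.
Proof.
  intros H z eps Heps; destruct (H z eps Heps) as [delta Hd].
  exists delta; split; [apply cond_pos|].
  intros h H1 H2; apply Hd; [lra | rewrite Rabs_left; lra].
Qed.

Lemma rpow_0_r x : rpow x 0 = 1.
Proof.
  unfold rpow; destruct (Req_EM_T x 0), (Req_EM_T 0 0); try lra.
  unfold Rpower; now rewrite Rmult_0_l, exp_0.
Qed.

Lemma rpow_1_r x : 0 <= x -> rpow x 1 = x.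
Proof.
  intros Hx; unfold rpow; destruct (Req_EM_T x 0), (Req_EM_T 1 0); try lra.
  apply Rpower_1; lra.
Qed.

(** [rho_positive_at h] is [rho(sigma) > 0] for [h = phi'(sigma .)]. *)
Definition rho_positive_at (h : R -> R) : Prop :=
  exists a0 a1 a2 b0 b2,
    gauss_exp h a0 /\
    gauss_exp (fun z => h z * z) a1 /\
    gauss_exp (fun z => h z * z ^ 2) a2 /\
    gauss_exp (fun z => h z ^ 2) b0 /\
    gauss_exp (fun z => h z ^ 2 * z ^ 2) b2 /\
    0 < Rmin (b0 - a0 ^ 2 - a1 ^ 2) (Rmin (b2 - a1 ^ 2 - a2 ^ 2) (a0 * a2 - a1 ^ 2)).

Definition rho_positive (d : R -> R) : Prop :=
  forall sigma, 0 < sigma -> rho_positive_at (fun z => d (sigma * z)).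

Lemma AllProps_intro phi d : is_left_deriv phi d ->
  (exists L1 p, 0 < L1 /\ 0 <= p /\ forall z, 0 <= d z /\ d z <= L1 * rpow (Rabs z) p) ->
  rho_positive d ->
  ((exists dd L2, is_left_deriv d dd /\ forall z, Rabs (dd z) <= L2)
   \/ (exists S : list R, forall z, ~ In z S -> derivable_pt_lim d z 0)) ->
  AllProps phi.
Proof. intros Hd H1 H2 H3; repeat split; exists d; split; assumption. Qed.

Lemma Rmin3_gt0 a b c : 0 < Rmin a (Rmin b c) <-> 0 < a /\ 0 < b /\ 0 < c.
Proof.
  split.
  - intros H; pose proof (Rmin_l a (Rmin b c)); pose proof (Rmin_r a (Rmin b c)).
    pose proof (Rmin_l b c); pose proof (Rmin_r b c); lra.
  - intros (Ha & Hb & Hc); now repeat apply Rmin_glb_lt.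
Qed.

Lemma is_left_deriv_scal f d c : is_left_deriv f d ->
  is_left_deriv (fun z => c * f z) (fun z => c * d z).
Proof.
  intros H z eps Heps.
  destruct (H z (eps / (Rabs c + 1))) as [delta [Hdelta Hq]];
    [apply Rdiv_lt_0_compat; [lra | pose proof (Rabs_pos c); lra]|].
  exists delta; split; [exact Hdelta|]; intros h H1 H2; specialize (Hq h H1 H2).
  replace ((c * f (z + h) - c * f z) / h - c * d z) with (c * ((f (z + h) - f z) / h - d z))
    by (field; lra).
  rewrite Rabs_mult; pose proof (Rabs_pos c); pose proof (Rabs_pos ((f (z + h) - f z) / h - d z)).
  apply Rle_lt_trans with ((Rabs c + 1) * Rabs ((f (z + h) - f z) / h - d z)); [nra|].
  apply Rmult_lt_reg_l with (/ (Rabs c + 1)); [apply Rinv_0_lt_compat; lra|].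
  rewrite <- Rmult_assoc, Rinv_l by lra; unfold Rdiv in Hq; lra.
Qed.

(** * ReLU, leaky ReLU and squared ReLU *)

(** The left derivative of [z |-> Rmax z (c * z)]; at the kink it takes the left value [c]. *)
Definition step (c z : R) : R := if Rlt_dec 0 z then 1 else c.

Lemma step_pos c z : 0 < z -> step c z = 1.
Proof. intros H; unfold step; destruct (Rlt_dec 0 z); lra. Qed.

Lemma step_nonpos c z : z <= 0 -> step c z = c.
Proof. intros H; unfold step; destruct (Rlt_dec 0 z); lra. Qed.

Lemma is_left_deriv_Rmax_slope c : 0 <= c <= 1 ->
  is_left_deriv (fun z => Rmax z (c * z)) (step c).
Proof.
  intros Hc z eps Heps; destruct (Rlt_le_dec 0 z).
  - exists z; split; [lra|]; intros h H1 H2.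
    rewrite step_pos, !Rmax_left by nra.
    replace ((z + h - z) / h - 1) with 0 by (field; lra); rewrite Rabs_R0; lra.
  - exists 1; split; [lra|]; intros h H1 H2.
    rewrite step_nonpos, !Rmax_right by nra.
    replace ((c * (z + h) - c * z) / h - c) with 0 by (field; lra); rewrite Rabs_R0; lra.
Qed.

Lemma derivable_pt_lim_step c z : z <> 0 -> derivable_pt_lim (step c) z 0.
Proof.
  intros Hz eps Heps; exists (mkposreal (Rabs z) (Rabs_pos_lt z Hz)).
  intros h Hh Hhz; simpl in Hhz.
  replace (step c (z + h)) with (step c z).
  - replace ((step c z - step c z) / h - 0) with 0 by (field; exact Hh); rewrite Rabs_R0; lra.
  - destruct (Rlt_le_dec 0 z).
    + rewrite (Rabs_right z) in Hhz by lra; apply Rabs_def2 in Hhz.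
      rewrite (step_pos c z), (step_pos c (z + h)); lra.
    + rewrite (Rabs_left z) in Hhz by lra; apply Rabs_def2 in Hhz.
      rewrite (step_nonpos c z), (step_nonpos c (z + h)); lra.
Qed.

Lemma rho_positive_step c : 0 <= c < 1 -> rho_positive (step c).
Proof.
  intros Hc s Hs.
  assert (P : forall z, 0 < z -> step c (s * z) = 1) by (intros; apply step_pos; nra).
  assert (N : forall z, 0 < z -> step c (s * - z) = c) by (intros; apply step_nonpos; nra).
  do 5 eexists; split; [|split; [|split; [|split; [|split]]]].
  - apply (gauss_exp_piecewise_monomial _ 0 1 c); try lia;
      intros z Hz; rewrite ?N, ?P by exact Hz; ring.
  - apply (gauss_exp_piecewise_monomial _ 1 1 (- c)); try lia;
      intros z Hz; rewrite ?N, ?P by exact Hz; ring.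
  - apply (gauss_exp_piecewise_monomial _ 2 1 c); try lia;
      intros z Hz; rewrite ?N, ?P by exact Hz; ring.
  - apply (gauss_exp_piecewise_monomial _ 0 1 (c ^ 2)); try lia;
      intros z Hz; rewrite ?N, ?P by exact Hz; ring.
  - apply (gauss_exp_piecewise_monomial _ 2 1 (c ^ 2)); try lia;
      intros z Hz; rewrite ?N, ?P by exact Hz; ring.
  - apply Rmin3_gt0; simpl gauss_half_moment.
    pose proof gauss_density_0_sqr_bounds.
    assert (0 < (1 - c) ^ 2 * (1 / 4 - gauss_density 0 ^ 2))
      by (apply Rmult_lt_0_compat; [apply pow_lt|]; lra).
    repeat split; nra.
Qed.

Lemma AllProps_Rmax_slope c : 0 <= c < 1 -> AllProps (fun z => Rmax z (c * z)).
Proof.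
  intros Hc; apply AllProps_intro with (step c).
  - apply is_left_deriv_Rmax_slope; lra.
  - exists 1, 0; repeat split; [lra | lra | |]; rewrite ?rpow_0_r;
      unfold step; destruct (Rlt_dec 0 z); lra.
  - now apply rho_positive_step.
  - right; exists (0 :: nil); intros z Hz; apply derivable_pt_lim_step.
    intros ->; apply Hz; now left.
Qed.

Lemma relu_eq : relu = fun z => Rmax z (0 * z).
Proof. apply functional_extensionality; intros z; unfold relu; now rewrite Rmult_0_l. Qed.

Lemma AllProps_relu : AllProps relu.
Proof. rewrite relu_eq; apply AllProps_Rmax_slope; lra. Qed.

Lemma AllProps_leaky_relu : AllProps leaky_relu.
Proof.
  replace leaky_relu with (fun z => Rmax z (1 / 100 * z)).
  - apply AllProps_Rmax_slope; lra.
  - apply functional_extensionality; intros z; unfold leaky_relu; f_equal; field.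
Qed.

Lemma is_left_deriv_relu : is_left_deriv relu (step 0).
Proof. rewrite relu_eq; apply is_left_deriv_Rmax_slope; lra. Qed.

Lemma is_left_deriv_sq_relu : is_left_deriv sq_relu (fun z => 2 * relu z).
Proof.
  intros z eps Heps; unfold sq_relu, relu; destruct (Rlt_le_dec 0 z).
  - exists (Rmin z eps); split; [now apply Rmin_pos|]; intros h H1 H2.
    pose proof (Rmin_l z eps); pose proof (Rmin_r z eps).
    rewrite !Rmax_left by lra.
    replace (((z + h) ^ 2 - z ^ 2) / h - 2 * z) with h by (field; lra).
    rewrite Rabs_left; lra.
  - exists 1; split; [lra|]; intros h H1 H2.
    rewrite !Rmax_right by lra.
    replace ((0 ^ 2 - 0 ^ 2) / h - 2 * 0) with 0 by (field; lra); rewrite Rabs_R0; lra.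
Qed.

Lemma rho_positive_double_relu : rho_positive (fun z => 2 * relu z).
Proof.
  intros s Hs.
  assert (P : forall z, 0 < z -> relu (s * z) = s * z)
    by (intros; unfold relu; apply Rmax_left; nra).
  assert (N : forall z, 0 < z -> relu (s * - z) = 0)
    by (intros; unfold relu; apply Rmax_right; nra).
  do 5 eexists; split; [|split; [|split; [|split; [|split]]]].
  - apply (gauss_exp_piecewise_monomial _ 1 (2 * s) 0); try lia;
      intros z Hz; rewrite ?N, ?P by exact Hz; ring.
  - apply (gauss_exp_piecewise_monomial _ 2 (2 * s) 0); try lia;
      intros z Hz; rewrite ?N, ?P by exact Hz; ring.
  - apply (gauss_exp_piecewise_monomial _ 3 (2 * s) 0); try lia;
      intros z Hz; rewrite ?N, ?P by exact Hz; ring.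
  - apply (gauss_exp_piecewise_monomial _ 2 (4 * s ^ 2) 0); try lia;
      intros z Hz; rewrite ?N, ?P by exact Hz; ring.
  - apply (gauss_exp_piecewise_monomial _ 4 (4 * s ^ 2) 0); try lia;
      intros z Hz; rewrite ?N, ?P by exact Hz; ring.
  - apply Rmin3_gt0; simpl gauss_half_moment.
    pose proof gauss_density_0_sqr_bounds; assert (0 < s * s) by nra.
    repeat split; nra.
Qed.

Lemma AllProps_sq_relu : AllProps sq_relu.
Proof.
  apply AllProps_intro with (fun z => 2 * relu z).
  - apply is_left_deriv_sq_relu.
  - exists 2, 1; repeat split; [lra | lra | |]; unfold relu.
    + pose proof (Rmax_r z 0); lra.
    + rewrite rpow_1_r by apply Rabs_pos; apply Rmult_le_compat_l; [lra|].
      apply Rmax_lub; [apply Rle_abs | apply Rabs_pos].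
  - apply rho_positive_double_relu.
  - left; exists (fun z => 2 * step 0 z), 2; split.
    + apply is_left_deriv_scal, is_left_deriv_relu.
    + intros z; unfold step; destruct (Rlt_dec 0 z); rewrite Rabs_right; lra.
Qed.

(** * Even bounded derivatives *)

Lemma continuity_pt_mult_pow_gauss_density g k z : continuity_pt g z ->
  continuity_pt (fun z => g z * (z ^ k * gauss_density z)) z.
Proof. intros Hg; apply continuity_pt_mult; [exact Hg | apply continuity_pt_pow_gauss_density]. Qed.

Lemma ex_RInt_pos_bounded_moment g C k : (k <= 4)%nat ->
  (forall z, continuity_pt g z) -> (forall z, Rabs (g z) <= C) ->
  exists l, is_RInt_pos (fun z => g z * (z ^ k * gauss_density z)) l.
Proof.
  intros Hk Hc Hb.
  apply (ex_RInt_pos_dominated _ (fun z => C * (z ^ k * gauss_density z))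
           (C * gauss_half_moment k)).
  - apply locally_integrable_continuous; intros z; now apply continuity_pt_mult_pow_gauss_density.
  - apply locally_integrable_scal, locally_integrable_pow_gauss_density.
  - intros z Hz; pose proof (gauss_density_pos z); pose proof (pow_lt z k Hz).
    rewrite Rabs_mult, (Rabs_right (_ * _)) by nra.
    apply Rmult_le_compat_r; [nra | apply Hb].
  - apply is_RInt_pos_scal;
      [apply locally_integrable_pow_gauss_density | now apply is_RInt_pos_gauss_moment].
Qed.

Lemma gauss_exp_of_is_RInt_pos_even g f j l :
  (forall z, continuity_pt g z) -> (forall z, g (- z) = g z) ->
  (forall z, f z = g z * z ^ j) ->
  is_RInt_pos (fun z => g z * (z ^ j * gauss_density z)) l -> gauss_exp f (l + (-1) ^ j * l).
Proof.
  intros Hc He Hf Hl; apply gauss_exp_of_is_RInt_line.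
  apply is_RInt_line_parity with (s := (-1) ^ j).
  - apply locally_integrable_continuous; intros z.
    apply continuity_pt_ext with (fun z => g z * (z ^ j * gauss_density z));
      [intros; rewrite Hf; ring | now apply continuity_pt_mult_pow_gauss_density].
  - intros z; rewrite !Hf, He, gauss_density_even.
    replace (- z) with (-1 * z) by ring; rewrite Rpow_mult_distr; ring.
  - apply is_RInt_pos_ext with (2 := Hl); intros; rewrite Hf; ring.
Qed.

(** Positivity of [E[(g z - c)^2 z^k ; z > 0]], expanded by linearity. *)
Lemma weighted_variance_pos g k c z0 P Q : (k <= 4)%nat ->
  (forall z, continuity_pt g z) -> 0 < z0 -> g z0 <> c ->
  is_RInt_pos (fun z => g z * (z ^ k * gauss_density z)) P ->
  is_RInt_pos (fun z => g z ^ 2 * (z ^ k * gauss_density z)) Q ->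
  0 < Q - 2 * c * P + c ^ 2 * gauss_half_moment k.
Proof.
  intros Hk Hc Hz0 Hne HP HQ.
  set (w z := z ^ k * gauss_density z).
  assert (Hcg : forall z, continuity_pt (fun z => (g z - c) ^ 2 * w z) z).
  { intros z; apply (continuity_pt_mult_pow_gauss_density (fun z => (g z - c) ^ 2)).
    apply continuity_pt_pow_fun, continuity_pt_minus; [apply Hc|].
    apply continuity_pt_const; intros ? ?; reflexivity. }
  assert (Ig : forall j, locally_integrable (fun z => g z ^ j * w z)).
  { intros j; apply locally_integrable_continuous; intros z.
    now apply continuity_pt_mult_pow_gauss_density, continuity_pt_pow_fun. }
  assert (Iw := locally_integrable_pow_gauss_density k).
  apply (is_RInt_pos_gt0 (fun z => (g z - c) ^ 2 * w z) _ z0 Hcg); [| exact Hz0 | |].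
  - intros z Hz; pose proof (gauss_density_pos z); pose proof (pow_lt z k Hz).
    apply Rmult_le_pos; [apply pow2_ge_0 | unfold w; apply Rmult_le_pos; lra].
  - pose proof (gauss_density_pos z0); pose proof (pow_lt z0 k Hz0).
    apply Rmult_lt_0_compat; [|unfold w; now apply Rmult_lt_0_compat].
    rewrite <- Rsqr_pow2; apply Rsqr_pos_lt; intro; apply Hne; lra.
  - replace (Q - 2 * c * P + c ^ 2 * gauss_half_moment k)
      with (Q + -2 * c * P + c ^ 2 * gauss_half_moment k) by ring.
    apply is_RInt_pos_ext with
      (fun z => (g z ^ 2 * w z + -2 * c * (g z ^ 1 * w z)) + c ^ 2 * w z); [intros; ring|].
    apply is_RInt_pos_plus;
      [apply locally_integrable_plus, locally_integrable_scal | apply locally_integrable_scal | |];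
      auto.
    + apply is_RInt_pos_plus; [| apply locally_integrable_scal | exact HQ |]; auto.
      apply is_RInt_pos_scal; [apply Ig|].
      apply is_RInt_pos_ext with (2 := HP); intros; unfold w; ring.
    + apply is_RInt_pos_scal; [exact Iw | now apply is_RInt_pos_gauss_moment].
Qed.

Lemma is_RInt_pos_moment_gt0 g k z0 l :
  (forall z, continuity_pt g z) -> (forall z, 0 <= g z) -> 0 < z0 -> 0 < g z0 ->
  is_RInt_pos (fun z => g z * (z ^ k * gauss_density z)) l -> 0 < l.
Proof.
  intros Hc Hg Hz0 Hgz0; apply is_RInt_pos_gt0 with z0; [| | exact Hz0 |].
  - intros z; now apply continuity_pt_mult_pow_gauss_density.
  - intros z Hz; pose proof (gauss_density_pos z); pose proof (pow_lt z k Hz).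
    apply Rmult_le_pos; [apply Hg | nra].
  - pose proof (gauss_density_pos z0); pose proof (pow_lt z0 k Hz0).
    apply Rmult_lt_0_compat; [exact Hgz0 | nra].
Qed.

Lemma rho_positive_at_even h B :
  (forall z, continuity_pt h z) -> (forall z, h (- z) = h z) -> (forall z, 0 <= h z <= B) ->
  (forall c, exists z, 0 < z /\ h z <> c) -> rho_positive_at h.
Proof.
  intros Hc He Hb Hn.
  assert (Hb1 : forall z, Rabs (h z) <= B)
    by (intros z; specialize (Hb z); rewrite Rabs_right; lra).
  assert (Hb2 : forall z, Rabs (h z ^ 2) <= B * B)
    by (intros z; specialize (Hb z); rewrite Rabs_right; simpl; nra).
  assert (Hc2 : forall z, continuity_pt (fun z => h z ^ 2) z)
    by (intros; now apply continuity_pt_pow_fun).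
  assert (He2 : forall z, h (- z) ^ 2 = h z ^ 2) by (intros; now rewrite He).
  destruct (ex_RInt_pos_bounded_moment h B 0) as [P0 HP0]; auto.
  destruct (ex_RInt_pos_bounded_moment h B 1) as [P1 HP1]; auto.
  destruct (ex_RInt_pos_bounded_moment h B 2) as [P2 HP2]; auto.
  destruct (ex_RInt_pos_bounded_moment (fun z => h z ^ 2) (B * B) 0) as [Q0 HQ0]; auto.
  destruct (ex_RInt_pos_bounded_moment (fun z => h z ^ 2) (B * B) 2) as [Q2 HQ2]; auto.
  exists (P0 + (-1) ^ 0 * P0), (P1 + (-1) ^ 1 * P1), (P2 + (-1) ^ 2 * P2),
    (Q0 + (-1) ^ 0 * Q0), (Q2 + (-1) ^ 2 * Q2).
  split; [|split; [|split; [|split; [|split]]]].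
  1-3: apply (gauss_exp_of_is_RInt_pos_even h); auto; intros; simpl; ring.
  1-2: apply (gauss_exp_of_is_RInt_pos_even (fun z => h z ^ 2)); auto; intros; simpl; ring.
  destruct (Hn (2 * P0)) as [z0 [Hz0 Hne0]], (Hn (2 * P2)) as [z2 [Hz2 Hne2]].
  destruct (Hn 0) as [z1 [Hz1 Hne1]].
  pose proof (weighted_variance_pos h 0 (2 * P0) z0 P0 Q0 ltac:(lia) Hc Hz0 Hne0 HP0 HQ0).
  pose proof (weighted_variance_pos h 2 (2 * P2) z2 P2 Q2 ltac:(lia) Hc Hz2 Hne2 HP2 HQ2).
  assert (Hh1 : 0 < h z1) by (specialize (Hb z1); lra).
  assert (0 < P0) by (apply (is_RInt_pos_moment_gt0 h 0 z1); auto; apply Hb).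
  assert (0 < P2) by (apply (is_RInt_pos_moment_gt0 h 2 z1); auto; apply Hb).
  apply Rmin3_gt0; simpl gauss_half_moment in *; simpl; repeat split; nra.
Qed.

Lemma even_nonconstant_on_pos d : (forall z, continuity_pt d z) -> (forall z, d (- z) = d z) ->
  (exists x y, d x <> d y) -> forall c, exists z, 0 < z /\ d z <> c.
Proof.
  intros Hc He [x [y Hxy]] c; apply NNPP; intros Hnot.
  assert (Hpos : forall z, 0 < z -> d z = c)
    by (intros z Hz; apply NNPP; intros Hne; apply Hnot; now exists z).
  assert (H0 : d 0 = c).
  { apply NNPP; intros Hne.
    destruct (continuity_pt_eps d 0 (Rabs (d 0 - c)) (Hc 0)) as [delta [Hdelta Hd]].
    { apply Rabs_pos_lt; intro; apply Hne; lra. }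
    specialize (Hd (delta / 2) ltac:(rewrite Rminus_0_r, Rabs_right; lra)).
    rewrite Hpos, <- Rabs_Ropp, Ropp_minus_distr in Hd by lra; lra. }
  assert (Hall : forall z, d z = c).
  { intros z; destruct (Rtotal_order z 0) as [Hz | [-> | Hz]]; [|exact H0 | now apply Hpos].
    rewrite <- (Ropp_involutive z), He; apply Hpos; lra. }
  apply Hxy; now rewrite (Hall x), (Hall y).
Qed.

Lemma AllProps_of_even_derivative phi d1 d2 :
  (forall z, derivable_pt_lim phi z (d1 z)) -> (forall z, derivable_pt_lim d1 z (d2 z)) ->
  (forall z, 0 <= d1 z) -> (exists B, forall z, Rabs (d1 z) <= B) ->
  (forall z, d1 (- z) = d1 z) -> (exists B, forall z, Rabs (d2 z) <= B) ->
  (exists x y, d1 x <> d1 y) -> AllProps phi.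
Proof.
  intros H1 H2 Hpos [B1 HB1] He [B2 HB2] Hn.
  assert (Hc : forall z, continuity_pt d1 z)
    by (intros z; apply derivable_continuous_pt; exists (d2 z); apply H2).
  assert (Hle : forall z, d1 z <= Rabs B1 + 1)
    by (intros z; pose proof (HB1 z); pose proof (Rle_abs (d1 z)); pose proof (Rle_abs B1); lra).
  apply AllProps_intro with d1.
  - now apply is_left_deriv_of_derivable.
  - exists (Rabs B1 + 1), 0; repeat split; [pose proof (Rabs_pos B1); lra | lra | apply Hpos |].
    rewrite rpow_0_r, Rmult_1_r; apply Hle.
  - intros s Hs; apply (rho_positive_at_even _ (Rabs B1 + 1)).
    + intros z; apply (continuity_pt_comp (fun z => s * z) d1); [|apply Hc].
      apply continuity_pt_scal, continuity_pt_id.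
    + intros z; rewrite <- He; f_equal; ring.
    + intros z; split; [apply Hpos | apply Hle].
    + intros c; destruct (even_nonconstant_on_pos d1 Hc He Hn c) as [z [Hz Hdz]].
      exists (z / s); split; [now apply Rdiv_lt_0_compat|].
      now replace (s * (z / s)) with z by (field; lra).
  - left; exists d2, B2; split; [now apply is_left_deriv_of_derivable | exact HB2].
Qed.

Lemma derivable_pt_lim_incr_nonneg f z l :
  (forall x y, x <= y -> f x <= f y) -> derivable_pt_lim f z l -> 0 <= l.
Proof.
  intros Hm Hd; apply Rnot_lt_le; intros Hl.
  destruct (Hd (- l / 2)) as [delta Hdelta]; [lra|].
  pose proof (cond_pos delta).
  specialize (Hdelta (delta / 2) ltac:(lra) ltac:(rewrite Rabs_right; lra)).
  assert (f z <= f (z + delta / 2)) by (apply Hm; lra).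
  assert (0 <= (f (z + delta / 2) - f z) / (delta / 2)) by (apply Rdiv_le_0_compat; lra).
  apply Rabs_def2 in Hdelta; lra.
Qed.

(** By the mean value theorem, a function with constant derivative is affine. *)
Lemma nonconstant_derivative_of_nonaffine phi d :
  (forall z, derivable_pt_lim phi z (d z)) -> (~ exists a b, forall z, phi z = a * z + b) ->
  exists x y, d x <> d y.
Proof.
  intros Hd Hnl; apply NNPP; intros Hc; apply Hnl.
  exists (d 0), (phi 0); intros z.
  destruct (MVT_gen phi 0 z d) as [c [_ Hmvt]].
  - intros x _; now apply is_derive_Reals.
  - intros x _; apply derivable_continuous_pt; exists (d x); apply Hd.
  - replace (d c) with (d 0) in Hmvt; [lra|].
    apply NNPP; intros Hne; apply Hc; now exists 0, c.
Qed.

Lemma AllProps_smooth (phi : R -> R) (D : nat -> R -> R) :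
  smooth_with phi D -> (~ exists a b, forall z, phi z = a * z + b) ->
  (forall x y, x <= y -> phi x <= phi y) ->
  (exists B, forall z, Rabs (D 1%nat z) <= B) -> (forall z, D 1%nat z = D 1%nat (- z)) ->
  (exists B, forall z, Rabs (D 2%nat z) <= B) -> AllProps phi.
Proof.
  intros [HD0 HDs] Hnl Hm HB1 He HB2.
  assert (H1 : forall z, derivable_pt_lim phi z (D 1%nat z))
    by (intros z; rewrite <- HD0; apply HDs).
  apply (AllProps_of_even_derivative phi (D 1%nat) (D 2%nat)); auto.
  - intros z; now apply (derivable_pt_lim_incr_nonneg phi z).
  - now apply nonconstant_derivative_of_nonaffine with phi.
Qed.

(** * Sigmoid, tanh and the error function *)

Lemma sigmoid_bounds z : 0 < sigmoid z < 1.
Proof.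
  unfold sigmoid; pose proof (exp_pos (- z)); split; [apply Rdiv_lt_0_compat; lra|].
  apply Rmult_lt_reg_r with (1 + exp (- z)); [lra|].
  unfold Rdiv; rewrite Rmult_assoc, Rinv_l; lra.
Qed.

Lemma sigmoid_gt_half x : 0 < x -> 1 / 2 < sigmoid x.
Proof.
  intros Hx; unfold sigmoid, Rdiv; rewrite !Rmult_1_l.
  pose proof (exp_neg_lt_1 x Hx); pose proof (exp_pos (- x)).
  apply Rinv_lt_contravar; nra.
Qed.

Lemma sigmoid_opp z : sigmoid (- z) = 1 - sigmoid z.
Proof. unfold sigmoid; rewrite Ropp_involutive, exp_Ropp; pose proof (exp_pos z); field; lra. Qed.

Lemma derivable_pt_lim_sigmoid z : derivable_pt_lim sigmoid z (sigmoid z * (1 - sigmoid z)).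
Proof.
  apply is_derive_Reals; unfold sigmoid; pose proof (exp_pos (- z)).
  auto_derive; [lra | field; lra].
Qed.

Lemma AllProps_sigmoid : AllProps sigmoid.
Proof.
  set (d z := sigmoid z * (1 - sigmoid z)).
  apply (AllProps_of_even_derivative sigmoid d (fun z => d z * (1 - 2 * sigmoid z)));
    unfold d; intros; try (pose proof (sigmoid_bounds z)).
  - apply derivable_pt_lim_sigmoid.
  - apply is_derive_Reals; unfold sigmoid; pose proof (exp_pos (- z)).
    auto_derive; [lra | field; lra].
  - nra.
  - exists 1; intros z; pose proof (sigmoid_bounds z); rewrite Rabs_right; nra.
  - rewrite sigmoid_opp; ring.
  - exists 1; intros z; pose proof (sigmoid_bounds z); apply Rabs_le; split; nra.
  - exists 0, 1; intros Heq.
    assert (Hs0 : sigmoid 0 = 1 / 2) by (unfold sigmoid; rewrite Ropp_0, exp_0; lra).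
    pose proof (sigmoid_gt_half 1 ltac:(lra)); pose proof (sigmoid_bounds 1).
    rewrite Hs0 in Heq; nra.
Qed.

Lemma tanh_eq z : tanh z = (exp z - exp (- z)) / (exp z + exp (- z)).
Proof. unfold tanh, sinh, cosh; pose proof (exp_pos z); pose proof (exp_pos (- z)); field; lra. Qed.

Lemma tanh_bounds z : -1 < tanh z < 1.
Proof.
  rewrite tanh_eq; pose proof (exp_pos z); pose proof (exp_pos (- z)).
  split; apply Rmult_lt_reg_r with (exp z + exp (- z)); try lra;
    unfold Rdiv; rewrite Rmult_assoc, Rinv_l; lra.
Qed.

Lemma tanh_pos x : 0 < x -> 0 < tanh x.
Proof.
  intros Hx; rewrite tanh_eq; pose proof (exp_pos x); pose proof (exp_pos (- x)).
  apply Rdiv_lt_0_compat; [|lra].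
  enough (exp (- x) < exp x) by lra; apply exp_increasing; lra.
Qed.

Lemma tanh_opp z : tanh (- z) = - tanh z.
Proof.
  rewrite !tanh_eq, Ropp_involutive; pose proof (exp_pos z); pose proof (exp_pos (- z)); field; lra.
Qed.

Lemma derivable_pt_lim_tanh z : derivable_pt_lim tanh z (1 - tanh z * tanh z).
Proof.
  apply is_derive_Reals, (is_derive_ext (fun z => (exp z - exp (- z)) / (exp z + exp (- z))));
    [intros; now rewrite tanh_eq|].
  rewrite tanh_eq; pose proof (exp_pos z); pose proof (exp_pos (- z)).
  auto_derive; [lra | unfold Rdiv; field; lra].
Qed.

Lemma AllProps_tanh : AllProps tanh.
Proof.
  set (d z := 1 - tanh z * tanh z).
  apply (AllProps_of_even_derivative tanh d (fun z => -2 * tanh z * d z));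
    unfold d; intros; try (pose proof (tanh_bounds z)).
  - apply derivable_pt_lim_tanh.
  - apply is_derive_Reals.
    apply (is_derive_ext (fun z => 1 - ((exp z - exp (- z)) / (exp z + exp (- z)))
                                    * ((exp z - exp (- z)) / (exp z + exp (- z)))));
      [intros; now rewrite tanh_eq|].
    rewrite tanh_eq; pose proof (exp_pos z); pose proof (exp_pos (- z)).
    auto_derive; [lra | unfold Rdiv; field; lra].
  - nra.
  - exists 1; intros z; pose proof (tanh_bounds z); rewrite Rabs_right; nra.
  - rewrite tanh_opp; ring.
  - exists 2; intros z; pose proof (tanh_bounds z).
    assert (0 <= (1 + tanh z) * (1 - tanh z * tanh z)) by (apply Rmult_le_pos; nra).
    assert (0 <= (1 - tanh z) * (1 - tanh z * tanh z)) by (apply Rmult_le_pos; nra).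
    apply Rabs_le; split; nra.
  - exists 0, 1; intros Heq.
    assert (Ht0 : tanh 0 = 0) by (rewrite tanh_eq, Ropp_0, exp_0; field).
    pose proof (tanh_pos 1 ltac:(lra)); rewrite Ht0 in Heq; nra.
Qed.

Lemma AllProps_erf phi :
  (forall z, has_integral (fun t => exp (- (t ^ 2))) 0 z (phi z)) -> AllProps phi.
Proof.
  intros Hphi.
  set (e z := exp (- (z ^ 2))).
  assert (Hc : forall z, continuity_pt e z)
    by (intros z; apply continuity_pt_of_ex_derive; unfold e; auto_derive; auto).
  assert (HI : forall b, is_RInt e 0 b (phi b)).
  { intros b; destruct (Hphi b) as [pr Hpr].
    rewrite <- Hpr, <- (RInt_Reals _ _ _ pr).
    apply (RInt_correct (V:=R_CompleteNormedModule)), ex_RInt_Reals_1, pr. }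
  apply (AllProps_of_even_derivative phi e (fun z => -2 * z * e z)); unfold e; intros.
  - apply is_derive_Reals, (is_derive_RInt (V:=R_CompleteNormedModule) e phi 0 z).
    + apply filter_forall; intros; apply HI.
    + apply continuity_pt_filterlim, Hc.
  - apply is_derive_Reals; auto_derive; [auto | simpl; ring].
  - apply Rlt_le, exp_pos.
  - exists 1; intros z; rewrite Rabs_right by apply Rle_ge, Rlt_le, exp_pos.
    rewrite <- exp_0; apply exp_le_exp; pose proof (pow2_ge_0 z); lra.
  - f_equal; ring.
  - (* [2 |z| exp (-z^2) <= (1 + z^2) exp (-z^2) <= 1] *)
    exists 1; intros z.
    pose proof (exp_ineq1_le (z ^ 2)).
    assert (E : exp (- (z ^ 2)) * exp (z ^ 2) = 1)
      by (rewrite <- exp_plus, Rplus_opp_l; apply exp_0).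
    pose proof (exp_pos (- (z ^ 2))).
    assert (A : 2 * Rabs z <= 1 + z ^ 2)
      by (pose proof (pow2_ge_0 (Rabs z - 1)); rewrite <- (pow2_abs z); nra).
    rewrite !Rabs_mult, (Rabs_right (exp _)), (Rabs_left (-2)) by lra.
    pose proof (Rabs_pos z); nra.
  - exists 0, 1; intros Heq.
    pose proof (exp_neg_lt_1 (1 ^ 2) ltac:(simpl; lra)).
    replace (- (0 ^ 2)) with 0 in Heq by (simpl; ring); rewrite exp_0 in Heq; lra.
Qed.

(** * The linear and quadratic counterexamples *)

Lemma not_Property2_id : ~ Property2 (fun z => z).
Proof.
  intros [d [Hl H2]].
  assert (Hd : forall z, d z = 1)
    by (intros z; apply (is_left_deriv_unique (fun z => z) d z 1 Hl), derivable_pt_lim_id).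
  destruct (H2 1 ltac:(lra)) as (a0 & a1 & a2 & b0 & b2 & G0 & G1 & _ & G3 & _ & Hr).
  apply Rmin3_gt0 in Hr as [Hr _].
  assert (A0 := gauss_exp_piecewise_monomial (fun z => d (1 * z)) 0 1 1 ltac:(lia)
                  ltac:(intros; simpl; rewrite Hd; ring) ltac:(intros; simpl; rewrite Hd; ring)).
  assert (A1 := gauss_exp_piecewise_monomial (fun z => d (1 * z) * z) 1 1 (-1) ltac:(lia)
                  ltac:(intros; simpl; rewrite Hd; ring) ltac:(intros; simpl; rewrite Hd; ring)).
  assert (B0 := gauss_exp_piecewise_monomial (fun z => d (1 * z) ^ 2) 0 1 1 ltac:(lia)
                  ltac:(intros; simpl; rewrite Hd; ring) ltac:(intros; simpl; rewrite Hd; ring)).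
  rewrite (gauss_exp_unique _ _ _ G0 A0), (gauss_exp_unique _ _ _ G1 A1),
    (gauss_exp_unique _ _ _ G3 B0) in Hr.
  simpl in Hr; lra.
Qed.

Lemma not_Property1_sqr : ~ Property1 (fun z => z ^ 2).
Proof.
  intros [d [Hl [L1 [p [_ [_ Hb]]]]]].
  assert (Hd : d (-1) = 2 * -1).
  { apply (is_left_deriv_unique (fun z => z ^ 2) d (-1) _ Hl).
    apply is_derive_Reals; auto_derive; [auto | ring]. }
  destruct (Hb (-1)) as [Hb1 _]; lra.
Qed.

Lemma not_Property2_sqr : ~ Property2 (fun z => z ^ 2).
Proof.
  intros [d [Hl H2]].
  assert (Hd : forall z, d z = 2 * z).
  { intros z; apply (is_left_deriv_unique (fun z => z ^ 2) d z _ Hl).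
    apply is_derive_Reals; auto_derive; [auto | ring]. }
  destruct (H2 1 ltac:(lra)) as (a0 & a1 & a2 & b0 & b2 & G0 & G1 & G2 & _ & _ & Hr).
  apply Rmin3_gt0 in Hr as (_ & _ & Hr).
  assert (A0 := gauss_exp_piecewise_monomial (fun z => d (1 * z)) 1 2 (-2) ltac:(lia)
                  ltac:(intros; simpl; rewrite Hd; ring) ltac:(intros; simpl; rewrite Hd; ring)).
  assert (A1 := gauss_exp_piecewise_monomial (fun z => d (1 * z) * z) 2 2 2 ltac:(lia)
                  ltac:(intros; simpl; rewrite Hd; ring) ltac:(intros; simpl; rewrite Hd; ring)).
  assert (A2 := gauss_exp_piecewise_monomial (fun z => d (1 * z) * z ^ 2) 3 2 (-2) ltac:(lia)
                  ltac:(intros; simpl; rewrite Hd; ring) ltac:(intros; simpl; rewrite Hd; ring)).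
  rewrite (gauss_exp_unique _ _ _ G0 A0), (gauss_exp_unique _ _ _ G1 A1),
    (gauss_exp_unique _ _ _ G2 A2) in Hr.
  simpl in Hr; lra.
Qed.

Theorem mainTheorem1 :
  AllProps relu /\
  AllProps leaky_relu /\
  AllProps sq_relu /\
  (forall (phi : R -> R) (D : nat -> R -> R),
     smooth_with phi D ->
     (~ exists a b, forall z, phi z = a * z + b) ->
     (forall x y, x <= y -> phi x <= phi y) ->
     (exists B, forall z, Rabs (D 1%nat z) <= B) ->
     (forall z, D 1%nat z = D 1%nat (- z)) ->
     (exists B, forall z, Rabs (D 2%nat z) <= B) ->
     AllProps phi) /\
  AllProps sigmoid /\
  AllProps tanh /\
  (forall phi : R -> R,
     (forall z, has_integral (fun t => exp (- (t ^ 2))) 0 z (phi z)) ->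
     AllProps phi) /\
  ~ Property2 (fun z => z) /\
  ~ Property1 (fun z => z ^ 2) /\
  ~ Property2 (fun z => z ^ 2).
Proof.
  exact (conj AllProps_relu (conj AllProps_leaky_relu (conj AllProps_sq_relu
    (conj AllProps_smooth (conj AllProps_sigmoid (conj AllProps_tanh (conj AllProps_erf
    (conj not_Property2_id (conj not_Property1_sqr not_Property2_sqr))))))))).
Qed.
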